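(* Let $n\in\mathbb N$ and let $\varphi\colon[0,\infty)\to[0,\infty)$ be a continuous increasing function with $\varphi(0)=0$ such that $\liminf_{r\to0^+}\varphi(r)/r^n>0$. Then there exist a continuous increasing function $\varphi^\circ\colon[0,\infty)\to[0,\infty)$ with $\varphi^\circ(0)=0$ and a constant $c=c(n)>0$ such that $r\mapsto\varphi^\circ(r)/r^n$ is non-increasing on $(0,\infty)$ and $$c\,\mathscr H^{\varphi}_\delta(E)\le \mathscr H^{\varphi^\circ}_\delta(E)\le \mathscr H^{\varphi}_\delta(E)$$ for every $\delta\in(0,\infty]$ and every set $E\subset\mathbb R^n$.
   Context: For a continuous increasing function $\phi\colon[0,\infty)\to[0,\infty)$ with $\phi(0)=0$, for $\delta\in(0,\infty]$ and $E\subset\mathbb R^n$, set $\mathscr H^{\phi}_\delta(E)=\inf\{\sum_{i=1}^\infty\phi(d(E_i)) : E_i\subset\mathbb R^n,\ d(E_i)\le\delta,\ E\subset\bigcup_i E_i\}$, where $d(\cdot)$ denotes the diameter. *)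

From mathcomp Require Import all_boot all_order all_algebra.
From mathcomp Require Import all_classical all_reals all_analysis.
Set Implicit Arguments. Unset Strict Implicit. Unset Printing Implicit Defensive.
Import Order.TTheory GRing.Theory Num.Theory numFieldNormedType.Exports.
Local Open Scope classical_set_scope.
Local Open Scope ring_scope.

Definition edist {R : realType} {n : nat} (x y : 'rV[R]_n) : R :=
  Num.sqrt (\sum_(i < n) (x ord0 i - y ord0 i) ^+ 2).

(* Diameter (extended real); diam set0 = 0. *)
Definition diam {R : realType} {n : nat} (E : set 'rV[R]_n) : \bar R :=
  ereal_sup ([set 0%:E] `|` [set (edist x y)%:E | x in E & y in E]).

(* Extension of phi : [0,oo) -> [0,oo) to [0,+oo]: phi(+oo) := sup phi
   (the monotone limit), phi(-oo) := 0 (never used: diameters are >= 0). *)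
Definition phiE {R : realType} (phi : R -> R) (x : \bar R) : \bar R :=
  match x with
  | r%:E => (phi r)%:E
  | +oo%E => ereal_sup [set (phi r)%:E | r in [set r : R | 0 <= r]]
  | -oo%E => 0%E
  end.

Definition hcontent {R : realType} {n : nat} (phi : R -> R) (delta : \bar R)
    (E : set 'rV[R]_n) : \bar R :=
  ereal_inf [set s | exists F : nat -> set 'rV[R]_n,
     [/\ (forall i, (diam (F i) <= delta)%E),
         E `<=` \bigcup_i F i &
         s = (\sum_(0 <= i <oo) phiE phi (diam (F i)))%E]].

Definition admissible_gauge {R : realType} (phi : R -> R) : Prop :=
  [/\ {within [set r : R | 0 <= r], continuous phi},
      (forall r, 0 <= r -> 0 <= phi r),
      (forall r s, 0 <= r -> r <= s -> phi r <= phi s) &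
      phi 0 = 0].

From mathcomp Require Import all_boot all_order all_algebra.
From mathcomp Require Import all_classical all_reals all_analysis.
From mathcomp Require Import lra ring.
Import Order.TTheory GRing.Theory Num.Theory numFieldNormedType.Exports.
Set Implicit Arguments. Unset Strict Implicit. Unset Printing Implicit Defensive.
Local Open Scope classical_set_scope.
Local Open Scope ring_scope.

(* The regularised gauge is phi'(r) = inf_{s > 0} phi(s) max(1, (r/s)^n).
   Taking s = r gives phi' <= phi, hence H^phi' <= H^phi.  Each term of the
   infimum is r^n times a non-increasing function of r, so phi'(r)/r^n is
   non-increasing, which also yields continuity of phi' away from 0.
   Conversely, a set of diameter d > s is covered by a grid of at most
   (3nd/s)^n cells of diameter <= s, so H^phi_delta(A) <= (3n)^n phi'(diam A);
   countable subadditivity of H^phi_delta then gives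
   (3n)^-n H^phi_delta <= H^phi'_delta.  The liminf hypothesis serves only
   sets of infinite diameter: it makes sup phi' = sup phi. *)

Lemma nneseries_pair_reindex (R : realType) (a : nat -> nat -> \bar R)
    (f : nat -> nat * nat) :
  set_bij [set: nat] [set: nat * nat] f -> (forall i j, (0 <= a i j)%E) ->
  (\sum_(k <oo) a (f k).1 (f k).2 = \sum_(i <oo) \sum_(j <oo) a i j)%E.
Proof.
move=> fbij a0.
rewrite nneseries_esumT // -(reindex_esum setT setT f (fun p => a p.1 p.2)) //.
rewrite nneseries_esumT; last by move=> i; exact: nneseries_ge0.
rewrite (eq_esum (b := fun i => \esum_(j in setT) a i j)); last first.
  by move=> i _; exact: nneseries_esumT.
rewrite esum_esum //; congr esum; apply/seteqP; split => //.
Qed.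

Section euclidean.
Variables (R : realType) (n : nat).
Implicit Types (x y : 'rV[R]_n) (A : set 'rV[R]_n).

Lemma coord_le_edist x y i : `|x ord0 i - y ord0 i| <= edist x y.
Proof.
rewrite /edist -sqrtr_sqr ler_sqrt; last by apply: sumr_ge0 => j _; exact: sqr_ge0.
by rewrite (bigD1 i) //= lerDl; apply: sumr_ge0 => j _; exact: sqr_ge0.
Qed.

Lemma edist_le_coord x y t : 0 <= t ->
  (forall i, `|x ord0 i - y ord0 i| <= t) -> edist x y <= n%:R * t.
Proof.
move=> t0 xyt; rewrite /edist -[n%:R * t]ger0_norm ?mulr_ge0 // -sqrtr_sqr.
rewrite ler_sqrt; last exact: sqr_ge0.
apply: (@le_trans _ _ (\sum_(i < n) t ^+ 2)).
  by apply: ler_sum => i _; rewrite -real_normK ?num_real // lerXn2r ?nnegrE.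
rewrite sumr_const card_ord exprMn -[t ^+ 2 *+ n]mulr_natl.
apply: ler_wpM2r; first exact: sqr_ge0.
by rewrite -natrX ler_nat; case: (n) => // k; rewrite expnS leq_pmulr.
Qed.

Local Open Scope ereal_scope.

Lemma diam_ge0 A : 0 <= diam A.
Proof. by apply: ereal_sup_ubound; left. Qed.

Lemma edist_le_diam A x y : A x -> A y -> (edist x y)%:E <= diam A.
Proof. by move=> Ax Ay; apply: ereal_sup_ubound; right; exists x => //; exists y. Qed.

Lemma diam_le A (d : R) : (0 <= d)%R ->
  (forall x y, A x -> A y -> (edist x y <= d)%R) -> diam A <= d%:E.
Proof.
move=> d0 Ad; apply: ge_ereal_sup => _ [->|[x Ax [y Ay <-]]]; rewrite lee_fin //.
exact: Ad.
Qed.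

Lemma diam_set0 : diam (@set0 'rV[R]_n) = 0.
Proof. by apply/eqP; rewrite eq_le diam_ge0 andbT; apply: diam_le => // x y []. Qed.

End euclidean.

Section hausdorff_content.
Variables (R : realType) (n : nat) (phi : R -> R) (delta : \bar R).
Hypothesis phi_ge0 : forall r, 0 <= r -> 0 <= phi r.
Local Open Scope ereal_scope.
Implicit Types (A E : set 'rV[R]_n).

Lemma phiE_ge0 x : 0 <= x -> 0 <= phiE phi x.
Proof.
case: x => [r|_|//] /=; first by rewrite !lee_fin => /phi_ge0.
apply: le_ereal_sup_tmp; exists (phi 0%R)%:E; first by exists 0%R; rewrite /= ?lexx.
by rewrite lee_fin phi_ge0.
Qed.

Lemma phiE_le_fin x (s : R) :
  (forall r r', (0 <= r)%R -> (r <= r')%R -> (phi r <= phi r')%R) ->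
  0 <= x -> x <= s%:E -> phiE phi x <= (phi s)%:E.
Proof. by move=> phi_nd; case: x => [r| |] //=; rewrite !lee_fin; exact: phi_nd. Qed.

Lemma phiE_diam_ge0 A : 0 <= phiE phi (diam A).
Proof. exact/phiE_ge0/diam_ge0. Qed.

Lemma hcontent_ge0 E : 0 <= hcontent phi delta E.
Proof.
apply: le_ereal_inf_tmp => _ [F [_ _ ->]].
by apply: nneseries_ge0 => i _ _; exact: phiE_diam_ge0.
Qed.

Lemma hcontent_le_fincover (T : finType) (G : T -> set 'rV[R]_n) E :
  phi 0 = 0%R -> 0 <= delta -> (forall k, diam (G k) <= delta) ->
  E `<=` \bigcup_k G k ->
  hcontent phi delta E <= \sum_(k : T) phiE phi (diam (G k)).
Proof.
move=> phi0 delta0 GD EG.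
pose F i := if (insub i : option 'I_#|T|) is Some j then G (enum_val j) else set0.
have F_enum_rank k : F (enum_rank k) = G k by rewrite /F valK enum_rankK.
apply: ereal_inf_lbound; exists F; split.
- by move=> i; rewrite /F; case: insub => [j|]; rewrite ?diam_set0.
- by move=> x /EG[k _ Gkx]; exists (enum_rank k) => //; rewrite F_enum_rank.
rewrite (nneseries_split 0 #|T|); last by move=> i _; exact: phiE_diam_ge0.
rewrite add0n eseries0 ?adde0; last first.
  by move=> i Ti _; rewrite /F insubN -?leqNgt // diam_set0 /= phi0.
rewrite big_mkord (big_enum_val (A := T)) /=.
by apply: eq_bigr => j _; rewrite /F valK.
Qed.

Lemma hcontent_le_diam A E : phi 0 = 0%R -> E `<=` A -> diam A <= delta ->
  hcontent phi delta E <= phiE phi (diam A).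
Proof.
move=> phi0 EA AD; have delta0 := le_trans (diam_ge0 A) AD.
have := @hcontent_le_fincover unit (fun=> A) E phi0 delta0 (fun=> AD).
by rewrite big_const card_unit /= adde0; apply => x /EA Ax; exists tt.
Qed.

Lemma hcontent_near_cover E (e : R) :
  hcontent phi delta E < +oo -> (0 < e)%R ->
  exists F : nat -> set 'rV[R]_n,
    [/\ forall i, diam (F i) <= delta, E `<=` \bigcup_i F i &
        \sum_(i <oo) phiE phi (diam (F i)) <= hcontent phi delta E + e%:E].
Proof.
move=> Eoo e0.
have Efin : hcontent phi delta E \is a fin_num by rewrite ge0_fin_numE ?hcontent_ge0.
have [_ [F [FD EF ->]] FE] := lb_ereal_inf_adherent e0 Efin.
by exists F; split => //; exact: ltW.
Qed.

Lemma hcontent_sigma_subadditive E (A : nat -> set 'rV[R]_n) :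
  E `<=` \bigcup_i A i ->
  hcontent phi delta E <= \sum_(i <oo) hcontent phi delta (A i).
Proof.
move=> EA.
have [[i Aioo]|/forallNP Afin] := pselect (exists i, hcontent phi delta (A i) = +oo).
  rewrite (eseries_pinfty _ _ Aioo) ?leey // => k _.
  by rewrite -ltNye (lt_le_trans _ (hcontent_ge0 _)).
apply/lee_addgt0Pr => e e0.
have /choice[G GA] : forall i, exists G : nat -> set 'rV[R]_n,
    [/\ forall j, diam (G j) <= delta, A i `<=` \bigcup_j G j &
        \sum_(j <oo) phiE phi (diam (G j)) <=
          hcontent phi delta (A i) + (e / (2 ^ i.+1)%:R)%:E].
  by move=> i; apply: hcontent_near_cover; rewrite ?ltey ?divr_gt0 //; exact/eqP/Afin.
have /card_esym/card_set_bijP[f fbij] := card_nat2.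
apply: le_trans (epsilon_trick xpredT (fun i => hcontent_ge0 (A i)) (ltW e0)).
apply: (@le_trans _ _ (\sum_(k <oo) phiE phi (diam (G (f k).1 (f k).2)))).
  apply: ereal_inf_lbound; exists (fun k => G (f k).1 (f k).2); split => //.
  - by move=> k; case: (GA (f k).1).
  - move=> x /EA[i _ Aix]; case: (GA i) => _ /(_ x Aix)[j _ Gijx] _.
    case: fbij => _ _ /(_ (i, j) I)[k _ fk].
    by exists k => //; rewrite fk.
rewrite (nneseries_pair_reindex (a := fun i j => phiE phi (diam (G i j))) fbij) //.
  apply: lee_nneseries => [i _ _|i _]; last by case: (GA i).
  by apply: nneseries_ge0 => j _ _; exact: phiE_diam_ge0.
by move=> i j; exact: phiE_diam_ge0.
Qed.

End hausdorff_content.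

Section hausdorff_content_comparison.
Variables (R : realType) (n : nat) (phi psi : R -> R) (delta : \bar R).
Hypotheses (phi_ge0 : forall r, 0 <= r -> 0 <= phi r)
           (psi_ge0 : forall r, 0 <= r -> 0 <= psi r).
Local Open Scope ereal_scope.

Lemma le_hcontent (E : set 'rV[R]_n) :
  (forall x, 0 <= x -> phiE psi x <= phiE phi x) ->
  hcontent psi delta E <= hcontent phi delta E.
Proof.
move=> psi_phi; apply: le_ereal_inf_tmp => _ [F [FD EF ->]].
apply: (@le_trans _ _ (\sum_(i <oo) phiE psi (diam (F i)))).
  by apply: ereal_inf_lbound; exists F.
apply: lee_nneseries => [i _ _|i _]; first exact: phiE_diam_ge0.
exact/psi_phi/diam_ge0.
Qed.

Lemma hcontent_le_scale (c : R) (E : set 'rV[R]_n) : (0 < c)%R ->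
  (forall A : set 'rV[R]_n,
     diam A <= delta -> hcontent phi delta A <= c%:E * phiE psi (diam A)) ->
  c^-1%:E * hcontent phi delta E <= hcontent psi delta E.
Proof.
move=> c0 phi_psi; apply: le_ereal_inf_tmp => _ [F [FD EF ->]].
have c'0 : 0 <= c^-1%:E by rewrite lee_fin invr_ge0 ltW.
apply: le_trans (lee_wpmul2l c'0 (hcontent_sigma_subadditive delta phi_ge0 EF)) _.
rewrite -nneseriesZl => [|i _]; last exact: hcontent_ge0.
apply: lee_nneseries => [i _ _|i _]; first by rewrite mule_ge0 ?hcontent_ge0.
by rewrite lee_pdivrMl //; exact: phi_psi.
Qed.

End hausdorff_content_comparison.

Lemma dist_le_between (R : realDomainType) (a b c : R) :
  (a <= b <= c) || (c <= b <= a) -> `|a - b| <= `|a - c|.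
Proof.
case/orP => /andP[h1 h2].
- have ac := le_trans h1 h2.
  by rewrite distrC [`|a - c|]distrC !ger0_norm ?subr_ge0 // lerD2r.
- have ca := le_trans h1 h2.
  by rewrite !ger0_norm ?subr_ge0 // lerD2l lerN2.
Qed.

Lemma cvg_within_dominated (R : realType) (A : set R) (f v : R -> R) x :
  v @ within A (nbhs x) --> v x ->
  (forall y, A y -> `|f x - f y| <= `|v x - v y|) ->
  f @ within A (nbhs x) --> f x.
Proof.
move=> /cvgrPdist_le vx fv; apply/cvgrPdist_le => e e0.
by apply: filterS2 (withinT _ _) (vx e e0) => y Ay; exact/le_trans/fv.
Qed.

(* A set of diameter [r] splits into about [(r/s)^n] pieces of diameter [s],
   at total cost [cover_cost n phi r s]; [regular_gauge] is set to [0] on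
   [r <= 0] instead of the infimum. *)
Definition cover_cost {R : realType} (n : nat) (phi : R -> R) (r s : R) : R :=
  phi s * Num.max 1 ((r / s) ^+ n).

Definition regular_gauge {R : realType} (n : nat) (phi : R -> R) (r : R) : R :=
  if r <= 0 then 0 else inf [set cover_cost n phi r s | s in [set s : R | 0 < s]].

Section regular_gauge.
Variables (R : realType) (n : nat) (phi : R -> R).
Hypotheses (phi_ge0 : forall r, 0 <= r -> 0 <= phi r)
           (phi_nondecr : forall r s, 0 <= r -> r <= s -> phi r <= phi s).
Local Notation cost := (cover_cost n phi).
Local Notation phio := (regular_gauge n phi).

Lemma cover_cost_ge0 r s : 0 < s -> 0 <= cost r s.
Proof. by move=> s0; rewrite mulr_ge0 ?phi_ge0 ?ltW // lt_max ltr01. Qed.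

Lemma regular_gauge_le_cost r s : 0 < r -> 0 < s -> phio r <= cost r s.
Proof.
move=> r0 s0; rewrite /regular_gauge ifF; last by rewrite leNgt r0.
by apply: ge_inf; [exists 0 => _ [t t0 <-]; exact: cover_cost_ge0 | exists s].
Qed.

Lemma regular_gauge_lb r x : 0 < r ->
  (forall s, 0 < s -> x <= cost r s) -> x <= phio r.
Proof.
move=> r0 xr; rewrite /regular_gauge ifF; last by rewrite leNgt r0.
apply: lb_le_inf; first by exists (cost r 1), 1 => /=.
by move=> _ [s s0 <-]; exact: xr.
Qed.

Lemma regular_gauge0 : phio 0 = 0.
Proof. by rewrite /regular_gauge lexx. Qed.

Lemma regular_gauge_ge0 r : 0 <= phio r.
Proof.
have [r0|r0] := leP r 0; first by rewrite /regular_gauge r0.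
by apply: regular_gauge_lb => // s s0; exact: cover_cost_ge0.
Qed.

Lemma regular_gauge_le r : 0 <= r -> phio r <= phi r.
Proof.
rewrite le_eqVlt => /predU1P[<-|r0]; first by rewrite regular_gauge0 phi_ge0.
apply: le_trans (regular_gauge_le_cost r0 r0) _.
by rewrite /cover_cost divff ?gt_eqF // expr1n maxxx mulr1.
Qed.

Lemma phiE_regular_gauge_le x : (0 <= x)%E -> (phiE phio x <= phiE phi x)%E.
Proof.
case: x => [r| |] //= r0; first by rewrite lee_fin regular_gauge_le.
apply: ge_ereal_sup => _ [r /= r0' <-]; apply: le_ereal_sup_tmp.
by exists (phi r)%:E; [exists r | rewrite lee_fin regular_gauge_le].
Qed.

Lemma cover_cost_nondecr r r' s : 0 < s -> 0 <= r -> r <= r' ->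
  cost r s <= cost r' s.
Proof.
move=> s0 r0 rr'; apply: ler_wpM2l; first exact/phi_ge0/ltW.
rewrite ge_max le_max lexx /= le_max; apply/orP; right.
have s'0 : 0 <= s^-1 by rewrite invr_ge0 ltW.
by rewrite lerXn2r ?nnegrE ?mulr_ge0 ?ler_wpM2r // (le_trans r0).
Qed.

Lemma regular_gauge_nondecr r r' : 0 <= r -> r <= r' -> phio r <= phio r'.
Proof.
rewrite le_eqVlt => /predU1P[<-|r0] rr'.
  by rewrite regular_gauge0 regular_gauge_ge0.
apply: regular_gauge_lb => [|s s0]; first exact: lt_le_trans rr'.
apply: le_trans (regular_gauge_le_cost r0 s0) _.
by apply: cover_cost_nondecr => //; exact: ltW.
Qed.

Lemma regular_gauge_dilate r r' : 0 < r -> r <= r' ->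
  phio r' <= (r' / r) ^+ n * phio r.
Proof.
move=> r0 rr'; set k := (r' / r) ^+ n.
have k1 : 1 <= k by rewrite exprn_ege1 // ler_pdivlMr // mul1r.
have k0 : 0 < k by apply: lt_le_trans k1.
rewrite -ler_pdivrMl //; apply: regular_gauge_lb => // s s0.
rewrite ler_pdivrMl //.
apply: le_trans (regular_gauge_le_cost (lt_le_trans r0 rr') s0) _.
rewrite /cover_cost mulrCA; apply: ler_wpM2l; first exact/phi_ge0/ltW.
have -> : (r' / s) ^+ n = k * (r / s) ^+ n by rewrite -exprMn mulrA divfK ?gt_eqF.
rewrite ge_max; apply/andP; split.
  rewrite (le_trans k1) //; apply: ler_peMr; [exact: ltW | by rewrite le_max lexx].
by apply: ler_wpM2l; [exact: ltW | rewrite le_max lexx orbT].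
Qed.

Lemma regular_gauge_ratio_nonincr r r' : 0 < r -> r <= r' ->
  phio r' / r' ^+ n <= phio r / r ^+ n.
Proof.
move=> r0 rr'; have r'0 := lt_le_trans r0 rr'.
have := regular_gauge_dilate r0 rr'.
rewrite expr_div_n mulrAC ler_pdivlMr ?exprn_gt0 // => dil.
by rewrite ler_pdivrMr ?exprn_gt0 // mulrAC ler_pdivlMr ?exprn_gt0 // [phio r * _]mulrC.
Qed.

Lemma regular_gauge_continuous : (0 < n)%N -> phi 0 = 0 ->
  phi @ within [set r : R | 0 <= r] (nbhs (0 : R)) --> phi 0 ->
  {within [set r : R | 0 <= r], continuous phio}.
Proof.
move=> n0 phi0 phi_cont0; apply/subspace_continuousP => x /=; rewrite /from_subspace /=.
rewrite le_eqVlt => /predU1P[<-|x0].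
  apply: (cvg_within_dominated phi_cont0) => y /= y0.
  rewrite regular_gauge0 phi0 !sub0r !normrN !ger0_norm ?regular_gauge_ge0 ?phi_ge0 //.
  exact: regular_gauge_le.
pose c := phio x / x ^+ n.
have cx : c * x ^+ n = phio x by rewrite divfK ?gt_eqF ?exprn_gt0.
apply: (@cvg_within_dominated _ _ _ (fun y => c * y ^+ n)).
  by apply: cvg_within_filter; apply: cvgMl_tmp; exact: exprn_continuous.
move=> y /= y0; rewrite cx; apply: dist_le_between.
have [xy|yx] := leP x y.
  rewrite (regular_gauge_nondecr (ltW x0) xy) /=.
  have -> : c * y ^+ n = (y / x) ^+ n * phio x by rewrite /c expr_div_n; ring.
  by rewrite regular_gauge_dilate.
rewrite (regular_gauge_nondecr y0 (ltW yx)) orbC andbT.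
move: y0; rewrite le_eqVlt => /predU1P[<-|y0].
  by rewrite expr0n gtn_eqF //= mulr0 regular_gauge_ge0.
by rewrite -ler_pdivlMr ?exprn_gt0 // regular_gauge_ratio_nonincr // ltW.
Qed.

End regular_gauge.

Lemma regular_gauge_admissible (R : realType) (n : nat) (phi : R -> R) :
  (0 < n)%N -> admissible_gauge phi -> admissible_gauge (regular_gauge n phi).
Proof.
move=> n0 [phi_cont phi_ge0 phi_nondecr phi0]; split.
- apply: regular_gauge_continuous => //.
  by move/subspace_continuousP : phi_cont; apply; rewrite /= lexx.
- by move=> r _; exact: regular_gauge_ge0.
- by move=> r s r0; exact: regular_gauge_nondecr.
- exact: regular_gauge0.
Qed.

Lemma limf_einf_gt0_lb (R : realType) (f : R -> R) :
  (0 < limf_einf (fun r => (f r)%:E) (0^'+))%E ->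
  exists a eta : R, [/\ 0 < a, 0 < eta & forall s, 0 < s -> s < eta -> a <= f s].
Proof.
rewrite limf_einfE => /ereal_sup_gt[_ [V /nbhs_ballP[e /= e0 eV] <-] Vgt0].
have Vs s : 0 < s -> s < e -> V s.
  move=> s0 se; apply: eV => //; rewrite /ball /= sub0r normrN gtr0_norm //.
have infV s : 0 < s -> s < e -> (ereal_inf [set (f r)%:E | r in V] <= (f s)%:E)%E.
  by move=> s0 se; apply: ereal_inf_lbound; exists s => //; exact: Vs.
move: Vgt0 infV; case: ereal_inf => [a| |] // a0 infV.
- by exists a, e; split => // s s0 se; rewrite -lee_fin infV.
- by exists 1, e; split => // s s0 se; have := infV s s0 se; rewrite leye_eq.
Qed.

Section regular_gauge_sup.
Variables (R : realType) (n : nat) (phi : R -> R) (a eta : R).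
Hypotheses (n0 : (0 < n)%N) (a0 : 0 < a) (eta0 : 0 < eta)
  (phi_ge0 : forall r, 0 <= r -> 0 <= phi r)
  (phi_nondecr : forall r s, 0 <= r -> r <= s -> phi r <= phi s)
  (phi_lb : forall s, 0 < s -> s < eta -> a <= phi s / s ^+ n).

Lemma regular_gauge_exceeds t : 0 <= t ->
  exists2 r, 0 <= r & phi t <= regular_gauge n phi r.
Proof.
move=> t0; pose e := eta / 2; pose p := a * e ^+ n.
have e0 : 0 < e by rewrite divr_gt0.
have e_eta : e < eta by rewrite ltr_pdivrMr // ltr_pMr // ltr1n.
have p0 : 0 < p by rewrite mulr_gt0 // exprn_gt0.
have phit0 := phi_ge0 t0.
(* large enough for the regimes [t <= s], [s < eta] and [eta <= s < t] *)
pose r := 1 + t + phi t / a + phi t * t / p.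
have phita : 0 <= phi t / a by apply: divr_ge0 => //; exact: ltW.
have phitp : 0 <= phi t * t / p by apply: divr_ge0; [exact: mulr_ge0 | exact: ltW].
have r0 : 0 < r by rewrite /r; lra.
exists r; first exact: ltW.
apply: regular_gauge_lb => // s s0; have s0' := ltW s0.
have [ts|st] := leP t s.
  apply: le_trans (phi_nondecr t0 ts) _.
  by apply: ler_peMr; [exact: phi_ge0 | rewrite le_max lexx].
have rs1 : 1 <= r / s by rewrite ler_pdivlMr // mul1r /r; lra.
apply: (@le_trans _ _ (phi s * (r / s) ^+ n)); last first.
  by apply: ler_wpM2l; [exact: phi_ge0 | rewrite le_max lexx orbT].
have [se|es] := ltP s eta.
  have -> : phi s * (r / s) ^+ n = phi s / s ^+ n * r ^+ n.
    by rewrite expr_div_n mulrCA mulrC.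
  apply: (@le_trans _ _ (a * r)); first by rewrite -ler_pdivrMl // mulrC /r; lra.
  by apply: ler_pM; [exact: ltW | exact: ltW | exact: phi_lb |
    apply: ler_eXnr => //; rewrite /r; lra].
have t0' : 0 < t := lt_trans s0 st.
apply: (@le_trans _ _ (p * (r / t))).
  by rewrite mulrA ler_pdivlMr // -ler_pdivrMl // mulrC /r; lra.
apply: ler_pM.
- exact: ltW.
- by apply: divr_ge0; exact: ltW.
- have p_le : p <= phi e by rewrite -ler_pdivlMr ?exprn_gt0 // phi_lb.
  exact: le_trans p_le (phi_nondecr (ltW e0) (ltW (lt_le_trans e_eta es))).
apply: le_trans (ler_eXnr n0 rs1).
apply: ler_wpM2l; first exact: ltW.
by rewrite lef_pV2 ?posrE // ltW.
Qed.

Lemma phiE_pinfty_le_regular_gauge :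
  (phiE phi +oo <= phiE (regular_gauge n phi) +oo)%E.
Proof.
apply: ge_ereal_sup => _ [t /= t0 <-].
have [r r0 phi_le] := regular_gauge_exceeds t0.
apply: le_ereal_sup_tmp; exists (regular_gauge n phi r)%:E; first by exists r.
by rewrite lee_fin.
Qed.

End regular_gauge_sup.

Definition grid_step {R : realType} (d : R) (m : nat) : R := 2 * d / m.+1%:R.

(* For [x] in [A], each [x_i - a_i + d] lies in [[0, 2d]]; cell [k] keeps the
   points for which it lies in the [k_i]-th of [m+1] equal subintervals. *)
Definition grid_cell {R : realType} {n : nat} (m : nat) (A : set 'rV[R]_n)
    (a : 'rV[R]_n) (d : R) (k : {ffun 'I_n -> 'I_m.+1}) : set 'rV[R]_n :=
  [set x | A x /\ forall i, (k i)%:R * grid_step d m <= x ord0 i - a ord0 i + d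
                              <= (k i).+1%:R * grid_step d m].

Section grid_cover.
Variables (R : realType) (n m : nat) (A : set 'rV[R]_n) (a : 'rV[R]_n) (d : R).
Hypotheses (Aa : A a) (A_diam : forall x y, A x -> A y -> edist x y <= d).

Let d0 : 0 <= d.
Proof. exact: le_trans (sqrtr_ge0 _) (A_diam Aa Aa). Qed.

Let step_ge0 : 0 <= grid_step d m.
Proof. by rewrite /grid_step divr_ge0 // mulr_ge0. Qed.

Lemma grid_cell_diam (k : {ffun 'I_n -> 'I_m.+1}) :
  (diam (grid_cell A a d k) <= (n%:R * grid_step d m)%:E)%E.
Proof.
apply: diam_le => [|x y [_ xk] [_ yk]]; first by rewrite mulr_ge0.
apply: edist_le_coord => // i.
have /andP[x1 x2] := xk i; have /andP[y1 y2] := yk i.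
rewrite -natr1 mulrDl mul1r in x2 y2.
by rewrite ler_norml; apply/andP; split; lra.
Qed.

Lemma grid_cell_cover : 0 < d ->
  A `<=` \bigcup_(k : {ffun 'I_n -> 'I_m.+1}) grid_cell A a d k.
Proof.
move=> dpos x Ax; pose t := grid_step d m; pose u i := x ord0 i - a ord0 i + d.
have t0 : 0 < t by rewrite divr_gt0 // mulr_gt0.
have mt : m.+1%:R * t = 2 * d by rewrite mulrC divfK ?pnatr_eq0.
have u_itv i : 0 <= u i <= 2 * d.
  have := le_trans (coord_le_edist x a i) (A_diam Ax Aa).
  by rewrite ler_norml /u => /andP[? ?]; apply/andP; split; lra.
exists [ffun i => inord (minn (Num.truncn (u i / t)) m)] => //; split => // i.
rewrite ffunE inordK ?ltnS ?geq_minr // -/t -/(u i).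
have /andP[u0 u2d] := u_itv i.
have ut0 : 0 <= u i / t by apply: divr_ge0 => //; exact: ltW.
have /andP[q1 q2] := truncn_itv ut0.
rewrite ler_pdivlMr // in q1; rewrite ltr_pdivrMr // in q2.
case: (leqP (Num.truncn (u i / t)) m) => qm.
  by rewrite q1 ltW.
rewrite mt u2d andbT; apply: le_trans q1.
by rewrite ler_pM2r // ler_nat ltnW.
Qed.

End grid_cover.

Lemma grid_size_exists (R : realType) (n : nat) (d s : R) :
  (0 < n)%N -> 0 < s -> s <= d ->
  exists m : nat, n%:R * grid_step d m <= s /\ m.+1%:R <= 3 * n%:R * (d / s).
Proof.
move=> n0 s0 sd; set z := n%:R * (d / s).
have z1 : 1 <= z.
  by rewrite -[1]mulr1 ler_pM // ?ler1n // ler_pdivlMr // mul1r.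
have z0 : 0 <= 2 * z by lra.
exists (Num.truncn (2 * z)); have /andP[mz zm] := truncn_itv z0.
split; last by rewrite -mulrA -/z -natr1; lra.
have nd : n%:R * (2 * d) = 2 * z * s by rewrite /z; field; rewrite gt_eqF.
by rewrite /grid_step mulrA ler_pdivrMr ?ltr0n // nd mulrC ler_pM2l ?ltW.
Qed.

Lemma hcontent_le_grid (R : realType) (n : nat) (phi : R -> R) (delta : \bar R)
    (A : set 'rV[R]_n) (a : 'rV[R]_n) (d s : R) :
  (forall r, 0 <= r -> 0 <= phi r) ->
  (forall r r', 0 <= r -> r <= r' -> phi r <= phi r') -> phi 0 = 0 ->
  (0 < n)%N -> 0 < s -> s <= d -> (s%:E <= delta)%E ->
  A a -> (forall x y, A x -> A y -> edist x y <= d) ->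
  (hcontent phi delta A <= ((3 * n%:R * (d / s)) ^+ n * phi s)%:E)%E.
Proof.
move=> phi_ge0 phi_nd phi0 n0 s0 sd sD Aa Ad.
have [m [step_s m_le]] := grid_size_exists n0 s0 sd.
have cell_s (k : {ffun 'I_n -> 'I_m.+1}) : (diam (grid_cell A a d k) <= s%:E)%E.
  by apply: le_trans (grid_cell_diam Aa Ad k) _; rewrite lee_fin.
have delta0 : (0 <= delta)%E by apply: le_trans sD; rewrite lee_fin ltW.
apply: le_trans (hcontent_le_fincover phi_ge0 phi0 delta0
  (fun k => le_trans (cell_s k) sD) (grid_cell_cover m Aa Ad (lt_le_trans s0 sd))) _.
apply: (@le_trans _ _ (\sum_(k : {ffun 'I_n -> 'I_m.+1}) (phi s)%:E)%E).
  by apply: lee_sum => k _; exact: phiE_le_fin phi_nd (diam_ge0 _) (cell_s k).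
rewrite sumEFin lee_fin sumr_const card_ffun !card_ord -[_ *+ _]mulr_natl natrX.
apply: ler_wpM2r; first exact/phi_ge0/ltW.
by rewrite lerXn2r ?nnegrE ?ler0n // (le_trans (ler0n _ _) m_le).
Qed.

Section covering_by_regular_gauge.
Variables (R : realType) (n : nat) (phi : R -> R) (delta : \bar R).
Hypotheses (n0 : (0 < n)%N) (phi_ge0 : forall r, 0 <= r -> 0 <= phi r)
  (phi_nondecr : forall r s, 0 <= r -> r <= s -> phi r <= phi s) (phi0 : phi 0 = 0).
Local Notation C := ((3 * n%:R) ^+ n : R).
Local Open Scope ereal_scope.

Let C_ge1 : (1 <= C)%R.
Proof. by apply: exprn_ege1; rewrite -natrM ler1n muln_gt0 n0. Qed.

Lemma hcontent_le_cover_cost (A : set 'rV[R]_n) (d s : R) :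
  diam A = d%:E -> (0 < d)%R -> (0 < s)%R -> diam A <= delta ->
  hcontent phi delta A <= (C * cover_cost n phi d s)%:E.
Proof.
move=> dA d0 s0 AD.
have cost0 : (0 <= cover_cost n phi d s)%R by exact: cover_cost_ge0.
have [ds|sd] := leP d s.
  apply: le_trans (hcontent_le_diam phi_ge0 phi0 (@subset_refl _ A) AD) _.
  rewrite dA lee_fin /= (le_trans (phi_nondecr (ltW d0) ds)) //.
  apply: (@le_trans _ _ (cover_cost n phi d s)); last exact: ler_peMl.
  by apply: ler_peMr; [exact/phi_ge0/ltW | rewrite le_max lexx].
have [a Aa] : A !=set0.
  apply/set0P/eqP => A0; move: dA; rewrite A0 diam_set0 => -[d_eq0].
  by rewrite -d_eq0 ltxx in d0.
have Ad x y : A x -> A y -> (edist x y <= d)%R.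
  by move=> Ax Ay; rewrite -lee_fin -dA; exact: edist_le_diam.
apply: le_trans (hcontent_le_grid phi_ge0 phi_nondecr phi0 n0 s0 (ltW sd) _ Aa Ad) _.
  by apply: le_trans AD; rewrite dA lee_fin ltW.
rewrite lee_fin exprMn -mulrA ler_wpM2l ?exprn_ge0 ?mulr_ge0 ?ler0n //.
rewrite mulrC; apply: ler_wpM2l; first exact/phi_ge0/ltW.
by rewrite expr_div_n le_max lexx orbT.
Qed.

Lemma hcontent_le_regular_gauge (A : set 'rV[R]_n) :
  phiE phi +oo <= phiE (regular_gauge n phi) +oo -> diam A <= delta ->
  hcontent phi delta A <= C%:E * phiE (regular_gauge n phi) (diam A).
Proof.
move=> sup_le AD.
have diam_bound := hcontent_le_diam phi_ge0 phi0 (@subset_refl _ A) AD.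
have := diam_ge0 A; case dA : (diam A) => [d| |] // d0; rewrite dA in diam_bound.
- move: d0; rewrite lee_fin le_eqVlt => /predU1P[d0|dpos].
    by rewrite -d0 /= regular_gauge0 mule0; move: diam_bound; rewrite -d0 /= phi0.
  have cost_bound s : (0 < s)%R ->
      hcontent phi delta A <= (C * cover_cost n phi d s)%:E.
    by move=> s0; exact: hcontent_le_cover_cost dA dpos s0 AD.
  have := hcontent_ge0 delta phi_ge0 A; have := cost_bound 1%R ltr01.
  case: (hcontent phi delta A) cost_bound => [h| |] //= cost_bound _ h0.
  have C0 : (0 < C)%R := lt_le_trans ltr01 C_ge1.
  rewrite lee_fin -ler_pdivrMl //; apply: regular_gauge_lb => // s s0.
  by rewrite ler_pdivrMl // -lee_fin cost_bound.
- apply: le_trans diam_bound (le_trans sup_le _).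
  apply: lee_pemull; last by rewrite lee_fin.
  by apply: phiE_ge0 => // r _; exact: regular_gauge_ge0.
Qed.

End covering_by_regular_gauge.

Lemma hcontent_rV0 (R : realType) (phi : R -> R) (delta : \bar R) (E : set 'rV[R]_0) :
  (forall r, 0 <= r -> 0 <= phi r) -> phi 0 = 0 -> (0 <= delta)%E ->
  hcontent phi delta E = 0%E.
Proof.
move=> phi_ge0 phi0 delta0.
have diamT : diam [set: 'rV[R]_0] = 0%E.
  apply/eqP; rewrite eq_le diam_ge0 andbT.
  by apply: diam_le => // x y _ _; rewrite /edist big_ord0 sqrtr0.
apply/eqP; rewrite eq_le hcontent_ge0 // andbT.
by have := hcontent_le_diam phi_ge0 phi0 (@subsetT _ E); rewrite diamT /= phi0; apply.
Qed.

Theorem lemma2p1 (R : realType) (n : nat) :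
  exists c : R, 0 < c /\
  forall phi : R -> R,
    admissible_gauge phi ->
    (0 < limf_einf (fun r : R => (phi r / r ^+ n)%:E) (0^'+))%E ->
    exists phio : R -> R,
      [/\ admissible_gauge phio,
          (forall r s : R, 0 < r -> r <= s -> phio s / s ^+ n <= phio r / r ^+ n) &
          forall (delta : \bar R) (E : set 'rV[R]_n), (0 < delta)%E ->
            (c%:E * hcontent phi delta E <= hcontent phio delta E)%E /\
            (hcontent phio delta E <= hcontent phi delta E)%E].
Proof.
case: n => [|n].
  (* [R^0] is a single point, so every content vanishes. *)
  exists 1; split => // phi [_ phi_ge0 _ phi0] _.
  have zero_adm : admissible_gauge (fun=> 0 : R).
    by split => //; apply/subspace_continuousP => x _; exact: cvg_cst.
  exists (fun=> 0); split => // delta E /ltW delta0.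
  by rewrite !hcontent_rV0 ?mule0.
pose C : R := (3 * n.+1%:R) ^+ n.+1.
have C0 : 0 < C by rewrite exprn_gt0 // mulr_gt0 // ltr0n.
exists C^-1; split; first by rewrite invr_gt0.
move=> phi phi_adm /limf_einf_gt0_lb[a [eta [a0 eta0 phi_lb]]].
have phio_adm := regular_gauge_admissible (ltn0Sn n) phi_adm.
case: (phi_adm) => _ phi_ge0 phi_nondecr phi0.
have sup_le := phiE_pinfty_le_regular_gauge (ltn0Sn n) a0 eta0 phi_ge0 phi_nondecr phi_lb.
exists (regular_gauge n.+1 phi); split => // [r s|delta E _].
  exact: regular_gauge_ratio_nonincr.
split.
  apply: hcontent_le_scale => // A AD.
  exact: hcontent_le_regular_gauge.
apply: le_hcontent => [r _|x]; first exact: regular_gauge_ge0.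
exact: phiE_regular_gauge_le.
Qed.
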